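(* Let $\mathcal{G}=(\mathcal{N},\mathcal{P})$ be a connected directed graph with nodes $\mathcal{N}=\{1,\dots,N\}$, edges $\mathcal{P}$ written $\ell=(m,n)$, and edge-node incidence matrix $\mathbf{A}\in\mathbb{R}^{P\times N}$ ($A_{\ell,m}=+1$, $A_{\ell,n}=-1$ for $\ell=(m,n)$, zeros elsewhere in row $\ell$). The edges are partitioned into compressors $\mathcal{P}_a$ and lossy pipes $\bar{\mathcal{P}}_a=\mathcal{P}\setminus\mathcal{P}_a$. Assume (A1) no compressor edge belongs to a cycle of $\mathcal{G}$, and (A2) every edge of $\mathcal{G}$ belongs to at most one cycle. Fix a reference node $r$ with given value $\psi_r$, injections $\mathbf{q}\in\mathbb{R}^N$ with $\mathbf{1}^\top\mathbf{q}=0$, $a_\ell>0$ for $\ell\in\bar{\mathcal{P}}_a$, and $\alpha_\ell>0$ for $\ell\in\mathcal{P}_a$. Problem (G1): find $(\boldsymbol{\phi},\boldsymbol{\psi})\in\mathbb{R}^P\times\mathbb{R}^N$ with the given $\psi_r$ such that $\mathbf{A}^\top\boldsymbol{\phi}=\mathbf{q}$; $\psi_m-\psi_n=a_\ell\,\mathrm{sign}(\phi_\ell)\phi_\ell^2$ for all $\ell=(m,n)\in\bar{\mathcal{P}}_a$; $\psi_n\ge0$ for all $n\in\mathcal{N}$; and $\psi_n=\alpha_\ell\psi_m$, $\phi_\ell\ge0$ for all $\ell=(m,n)\in\mathcal{P}_a$. Problem (G2), for a constant $M>0$: minimize $r(\boldsymbol{\psi}):=\sum_{(m,n)\in\bar{\mathcal{P}}_a}|\psi_m-\psi_n|$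 over $\boldsymbol{\phi}\in\mathbb{R}^P$, $\boldsymbol{\psi}\in\mathbb{R}^N$ (with the given $\psi_r$) and $\mathbf{x}\in\{0,1\}^{\bar{\mathcal{P}}_a}$, subject to $\mathbf{A}^\top\boldsymbol{\phi}=\mathbf{q}$; $\psi_n=\alpha_\ell\psi_m$ and $\phi_\ell\ge0$ for all $\ell=(m,n)\in\mathcal{P}_a$; and, for every $\ell=(m,n)\in\bar{\mathcal{P}}_a$: $-M(1-x_\ell)\le\phi_\ell\le Mx_\ell$, $-M(1-x_\ell)\le\psi_m-\psi_n-a_\ell\phi_\ell^2$, and $\psi_m-\psi_n+a_\ell\phi_\ell^2\le Mx_\ell$. If (G1) is feasible, then for $M$ sufficiently large, for every minimizer $(\boldsymbol{\phi},\boldsymbol{\psi},\mathbf{x})$ of (G2), the pair $(\boldsymbol{\phi},\boldsymbol{\psi})$ solves (G1).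
   Context: $\mathrm{sign}(x)=+1$ for $x>0$, $-1$ for $x<0$, $0$ for $x=0$. A cycle is a closed path in the underlying undirected graph with no repeated edges or nodes. $M$ is a ''big-M'' constant, which the paper takes to be large. *)

From mathcomp Require Import all_boot all_order all_algebra.
From mathcomp Require Import reals.
Set Implicit Arguments. Unset Strict Implicit. Unset Printing Implicit Defensive.
Import Order.TTheory GRing.Theory Num.Theory.
Local Open Scope ring_scope.

Section Graph.
Variables (N P : nat) (src dst : 'I_P -> 'I_N).

Definition joins (l : 'I_P) (u v : 'I_N) : bool :=
  ((src l == u) && (dst l == v)) || ((src l == v) && (dst l == u)).

Definition adj : rel 'I_N := fun u v => [exists l, joins l u v].

Definition connected_graph : Prop := forall u v : 'I_N, connect adj u v.

(* no self-loops (so that the incidence matrix is well defined) *)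
Definition loopless : Prop := forall l : 'I_P, src l != dst l.

(* a cycle of length k: closed path v_0 -e_0- v_1 - ... - v_{k-1} -e_{k-1}- v_0
   in the underlying undirected graph, with no repeated edges or nodes *)
Definition is_cycle (k : nat) (es : 'I_k -> 'I_P) (vs : 'I_k -> 'I_N) : Prop :=
  [/\ (0 < k)%N, injective es, injective vs &
      forall i : 'I_k, joins (es i) (vs i) (vs (ordS i))].

Definition on_cycle (l : 'I_P) : Prop :=
  exists k (es : 'I_k -> 'I_P) (vs : 'I_k -> 'I_N), is_cycle es vs /\ l \in codom es.

(* every edge belongs to at most one cycle (cycles identified by edge sets) *)
Definition at_most_one_cycle : Prop :=
  forall (l : 'I_P) k1 (es1 : 'I_k1 -> 'I_P) (vs1 : 'I_k1 -> 'I_N)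
                    k2 (es2 : 'I_k2 -> 'I_P) (vs2 : 'I_k2 -> 'I_N),
    is_cycle es1 vs1 -> is_cycle es2 vs2 ->
    l \in codom es1 -> l \in codom es2 -> codom es1 =i codom es2.

End Graph.

Section Gas.
Variables (R : realType) (N P : nat) (src dst : 'I_P -> 'I_N).

Definition incidence : 'M[R]_(P, N) :=
  \matrix_(l < P, n < N)
    (if src l == n then 1 else if dst l == n then -1 else 0).

Variables (comp : pred 'I_P) (r : 'I_N) (psir : R) (q : 'cV[R]_N)
          (a alpha : 'I_P -> R).

Definition G1_sol (phi : 'cV[R]_P) (psi : 'cV[R]_N) : Prop :=
  [/\ psi r 0 = psir,
      incidence^T *m phi = q,
      forall l, ~~ comp l ->
        psi (src l) 0 - psi (dst l) 0 = a l * Num.sg (phi l 0) * phi l 0 ^+ 2,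
      forall n, 0 <= psi n 0 &
      forall l, comp l -> psi (dst l) 0 = alpha l * psi (src l) 0 /\ 0 <= phi l 0].

Definition G2_obj (psi : 'cV[R]_N) : R :=
  \sum_(l < P | ~~ comp l) `|psi (src l) 0 - psi (dst l) 0|.

Definition G2_feas (M : R) (phi : 'cV[R]_P) (psi : 'cV[R]_N) (x : 'I_P -> bool)
  : Prop :=
  [/\ psi r 0 = psir,
      incidence^T *m phi = q,
      forall l, comp l -> psi (dst l) 0 = alpha l * psi (src l) 0 /\ 0 <= phi l 0 &
      forall l, ~~ comp l ->
        [/\ - M * (1 - (x l)%:R) <= phi l 0, phi l 0 <= M * (x l)%:R,
            - M * (1 - (x l)%:R) <= psi (src l) 0 - psi (dst l) 0 - a l * phi l 0 ^+ 2
          & psi (src l) 0 - psi (dst l) 0 + a l * phi l 0 ^+ 2 <= M * (x l)%:R]].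

Definition G2_min (M : R) phi psi x : Prop :=
  G2_feas M phi psi x /\
  forall phi' psi' x', G2_feas M phi' psi' x' -> G2_obj psi <= G2_obj psi'.

End Gas.

(** A solution (phis, psis) of (G1) is feasible for (G2) with x_l = [phis_l >= 0] as soon
    as M >= Σ_l (|phis_l| + 2|a_l| phis_l^2), so a minimizer (phi, psi, x) of (G2) has
    r(psi) <= r(psis).  On a pipe, the big-M constraints only say that the drop
    D_l = psi_m - psi_n lies beyond the loss a_l sign(phi_l) phi_l^2 on the side of phi_l.
    The difference phi - phis is a circulation, and since by (A1) and (A2) every edge lies on
    at most one cycle, it vanishes on bridges and its oriented value is a constant δ along
    each cycle.  On a bridge |D_l| dominates the G1 drop.  Around a cycle the oriented drops
    sum to zero, so Σ|D| is twice the sum of their positive parts, and shifting all oriented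
    flows by δ moves all positive parts of the losses the same way, strictly somewhere
    unless δ = 0.  So every cycle and every bridge contributes to r(psi) at least its share
    of r(psis), and optimality forces equality throughout: phi = phis, and psi has the G1
    drops on the pipes.  Those drops and the compressor ratios propagate psi = psis from the
    reference node over the connected graph. *)

From mathcomp Require Import all_boot all_order all_algebra.
From mathcomp Require Import reals boolp.
From mathcomp Require Import ring lra zify.
Set Implicit Arguments. Unset Strict Implicit. Unset Printing Implicit Defensive.
Import Order.TTheory GRing.Theory Num.Theory.
Local Open Scope ring_scope.

Lemma sum_codom (I T : finType) (V : nmodType) (h : I -> T) (F : T -> V) :
  injective h -> \sum_(t in codom h) F t = \sum_i F (h i).
Proof. by move=> h_inj; rewrite -big_uniq ?big_image // codomE map_inj_uniq ?enum_uniq. Qed.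

Section ZeroSums.
Variable R : realDomainType.

Lemma ltr_sum_le_lt (I : finType) (F G : I -> R) i0 :
  (forall i, F i <= G i) -> F i0 < G i0 -> \sum_i F i < \sum_i G i.
Proof.
move=> FG lt0; rewrite (bigD1 i0) //= [X in _ < X](bigD1 i0) //=.
by rewrite ltr_leD // ler_sum.
Qed.

Lemma normr_add_self_le (x y : R) : x <= y -> `|x| + x <= `|y| + y.
Proof.
move=> xy; case: (lerP 0 x) => x0.
  by rewrite !ger0_norm //; [lra | exact: le_trans xy].
by rewrite ltr0_norm // addNr -[X in 0 <= X + _]normrN -lerBlDr sub0r ler_norm.
Qed.

Lemma zero_sum_norm k (u : 'I_k -> R) : \sum_i u i = 0 ->
  \sum_i `|u i| = \sum_i (`|u i| + u i) /\ \sum_i `|u i| = \sum_i (`|u i| - u i).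
Proof. by move=> u0; rewrite big_split sumrB /= u0 addr0 subr0. Qed.

Lemma zero_sum_parts_eq k (u v : 'I_k -> R) :
  \sum_i u i = 0 -> \sum_i v i = 0 ->
  (forall i, `|v i| + v i <= `|u i| + u i) ->
  (forall i, `|v i| - v i <= `|u i| - u i) ->
  \sum_i `|u i| <= \sum_i `|v i| -> forall i, u i = v i.
Proof.
move=> u0 v0 pos neg uv i.
have [uP uN] := zero_sum_norm u0; have [vP vN] := zero_sum_norm v0.
have tight (w w' : 'I_k -> R) :
    (forall j, w' j <= w j) -> \sum_j w j <= \sum_j w' j -> w i = w' i.
  move=> ww' wsum; apply/eqP; rewrite -subr_eq0; apply/eqP.
  have ge0 j : predT j -> 0 <= w j - w' j by rewrite subr_ge0.
  apply: (psumr_eq0P ge0) => //; apply/eqP; rewrite eq_le sumrB subr_le0 wsum.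
  by rewrite -sumrB sumr_ge0.
have := tight _ _ pos; rewrite -uP -vP => /(_ uv).
have := tight _ _ neg; rewrite -uN -vN => /(_ uv).
lra.
Qed.

End ZeroSums.

Section PipeLoss.
Variable R : realDomainType.
Implicit Types a f D : R.

Definition pipe_loss a f : R := a * Num.sg f * f ^+ 2.

Definition exceeds_loss a f D : Prop :=
  (0 <= f /\ pipe_loss a f <= D) \/ (f <= 0 /\ D <= pipe_loss a f).

Lemma pipe_lossE a f : pipe_loss a f = a * (f * `|f|).
Proof. by rewrite /pipe_loss normrEsg; ring. Qed.

Lemma pipe_loss0 a : pipe_loss a 0 = 0.
Proof. by rewrite pipe_lossE mul0r mulr0. Qed.

Lemma pipe_loss_ge0E a f : 0 <= f -> pipe_loss a f = a * f ^+ 2.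
Proof. by move=> f0; rewrite pipe_lossE (ger0_norm f0) -expr2. Qed.

Lemma pipe_loss_le0E a f : f <= 0 -> pipe_loss a f = - (a * f ^+ 2).
Proof. by move=> f0; rewrite pipe_lossE (ler0_norm f0) mulrN -expr2 mulrN. Qed.

Lemma pipe_lossN a f : pipe_loss a (- f) = - pipe_loss a f.
Proof. by rewrite !pipe_lossE normrN; ring. Qed.

Lemma pipe_loss_sign a (b : bool) f :
  pipe_loss a ((-1) ^+ b * f) = (-1) ^+ b * pipe_loss a f.
Proof. by case: b; rewrite ?mul1r ?mulN1r ?pipe_lossN. Qed.

Lemma pipe_loss_ltr a : 0 < a -> {homo pipe_loss a : f g / f < g}.
Proof.
move=> a0 f g fg; rewrite !pipe_lossE ltr_pM2l //.
case: (lerP 0 f) => f0; case: (lerP 0 g) => g0;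
  rewrite ?(ger0_norm f0) ?(ltr0_norm f0) ?(ger0_norm g0) ?(ltr0_norm g0); nra.
Qed.

Lemma pipe_loss_ler a : 0 < a -> {homo pipe_loss a : f g / f <= g}.
Proof. by move/pipe_loss_ltr/ltW_homo. Qed.

Lemma exceeds_lossN a f D : exceeds_loss a f D -> exceeds_loss a (- f) (- D).
Proof.
rewrite /exceeds_loss pipe_lossN !lerN2 oppr_ge0 oppr_le0.
by case=> -[f0 fD]; [right | left].
Qed.

Lemma exceeds_loss_sign a (b : bool) f D :
  exceeds_loss a f D -> exceeds_loss a ((-1) ^+ b * f) ((-1) ^+ b * D).
Proof. by case: b; rewrite ?mul1r ?mulN1r //; exact: exceeds_lossN. Qed.

Lemma exceeds_loss_pos a f D : 0 < a -> exceeds_loss a f D ->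
  `|pipe_loss a f| + pipe_loss a f <= `|D| + D.
Proof.
move=> a0 [[f0 fD]|[f0 Df]].
  have L0 : 0 <= pipe_loss a f by rewrite -(pipe_loss0 a) pipe_loss_ler.
  rewrite !ger0_norm //; [lra | exact: le_trans fD].
have L0 : pipe_loss a f <= 0 by rewrite -(pipe_loss0 a) pipe_loss_ler.
rewrite ler0_norm //; have := ler_norm (- D); rewrite normrN; lra.
Qed.

Lemma exceeds_loss_neg a f D : 0 < a -> exceeds_loss a f D ->
  `|pipe_loss a f| - pipe_loss a f <= `|D| - D.
Proof.
move=> a0 /exceeds_lossN /(exceeds_loss_pos a0).
by rewrite pipe_lossN !normrN.
Qed.

Lemma exceeds_loss_norm a f D : 0 < a -> exceeds_loss a f D ->
  `|pipe_loss a f| <= `|D| /\ (`|D| <= `|pipe_loss a f| -> D = pipe_loss a f).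
Proof.
move=> a0 fD; have := exceeds_loss_pos a0 fD; have := exceeds_loss_neg a0 fD.
split=> [|?]; lra.
Qed.

Lemma cycle_loss_shift_ge0 k (a f fs D : 'I_k -> R) dl :
  (0 < k)%N -> (forall i, 0 < a i) -> (forall i, exceeds_loss (a i) (f i) (D i)) ->
  \sum_i D i = 0 -> \sum_i pipe_loss (a i) (fs i) = 0 ->
  (forall i, f i = fs i + dl) -> 0 <= dl ->
  \sum_i `|pipe_loss (a i) (fs i)| <= \sum_i `|D i| /\
  (\sum_i `|D i| <= \sum_i `|pipe_loss (a i) (fs i)| -> dl = 0).
Proof.
move=> k0 a0 fD D0 L0 f_shift dl0.
have [-> _] := zero_sum_norm D0; have [-> _] := zero_sum_norm L0.
have shift_le i : `|pipe_loss (a i) (fs i)| + pipe_loss (a i) (fs i) <= `|D i| + D i.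
  apply: le_trans (exceeds_loss_pos (a0 i) (fD i)).
  by apply/normr_add_self_le/pipe_loss_ler; rewrite ?f_shift ?lerDl.
split=> [|le_sum]; first exact: ler_sum.
apply/eqP; rewrite eq_le dl0 andbT leNgt; apply/negP => dl_gt0.
(* The losses of fs sum to zero, so some fs i is nonnegative; there the shift is strict. *)
have [i fs0] : exists i, 0 <= fs i.
  apply/existsP; apply: contraT; rewrite negb_exists => /forallP fs_lt0.
  have : \sum_i pipe_loss (a i) (fs i) < \sum_(i < k) 0.
    apply: ltr_sum => [|i _]; first by apply/hasP; exists (Ordinal k0); rewrite ?mem_index_enum.
    by rewrite -(pipe_loss0 (a i)) pipe_loss_ltr // ltNge fs_lt0.
  by rewrite L0 big1 // ltxx.
suff : \sum_i (`|pipe_loss (a i) (fs i)| + pipe_loss (a i) (fs i)) < \sum_i (`|D i| + D i).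
  by rewrite ltNge le_sum.
apply: (ltr_sum_le_lt (i0 := i) shift_le); apply: lt_le_trans (exceeds_loss_pos (a0 i) (fD i)).
have Ls0 : 0 <= pipe_loss (a i) (fs i) by rewrite -(pipe_loss0 (a i)) pipe_loss_ler.
have Lf : pipe_loss (a i) (fs i) < pipe_loss (a i) (f i).
  by rewrite pipe_loss_ltr // f_shift ltrDl.
by rewrite !ger0_norm ?ltrD //; apply: le_trans (ltW Lf).
Qed.

Lemma cycle_loss_shift k (a f fs D : 'I_k -> R) dl :
  (0 < k)%N -> (forall i, 0 < a i) -> (forall i, exceeds_loss (a i) (f i) (D i)) ->
  \sum_i D i = 0 -> \sum_i pipe_loss (a i) (fs i) = 0 ->
  (forall i, f i = fs i + dl) ->
  \sum_i `|pipe_loss (a i) (fs i)| <= \sum_i `|D i| /\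
  (\sum_i `|D i| <= \sum_i `|pipe_loss (a i) (fs i)| ->
     forall i, f i = fs i /\ D i = pipe_loss (a i) (fs i)).
Proof.
move=> k0 a0 fD D0 L0 f_shift.
suff [le_sum dl0] : \sum_i `|pipe_loss (a i) (fs i)| <= \sum_i `|D i| /\
    (\sum_i `|D i| <= \sum_i `|pipe_loss (a i) (fs i)| -> dl = 0).
  split=> // ge_sum; have f_fs i : f i = fs i by rewrite f_shift dl0 // addr0.
  move=> i; split=> //; apply: (zero_sum_parts_eq D0 L0) => // j;
    rewrite -f_fs; [exact: exceeds_loss_pos | exact: exceeds_loss_neg].
have [dl_ge0|dl_lt0] := lerP 0 dl; first exact: cycle_loss_shift_ge0 f_shift dl_ge0.
have fD' i : exceeds_loss (a i) (- f i) (- D i) by exact: exceeds_lossN.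
have shift' i : - f i = - fs i + - dl by rewrite f_shift opprD.
have eL : \sum_i `|pipe_loss (a i) (- fs i)| = \sum_i `|pipe_loss (a i) (fs i)|.
  by apply: eq_bigr => i _; rewrite pipe_lossN normrN.
have eD : \sum_i `|- D i| = \sum_i `|D i| by apply: eq_bigr => i _; rewrite normrN.
have L0' : \sum_i pipe_loss (a i) (- fs i) = 0.
  by rewrite (eq_bigr _ (fun i _ => pipe_lossN _ _)) sumrN L0 oppr0.
have D0' : \sum_i - D i = 0 by rewrite sumrN D0 oppr0.
have ndl_ge0 : 0 <= - dl by rewrite oppr_ge0 ltW.
have [le_sum dl0] := cycle_loss_shift_ge0 k0 a0 fD' D0' L0' shift' ndl_ge0.
rewrite eL eD in le_sum dl0; split=> // /dl0 /eqP.
by rewrite oppr_eq0 => /eqP.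
Qed.

Lemma big_M_exceeds_loss a f D M (x : bool) :
  - M * (1 - x%:R) <= f -> f <= M * x%:R ->
  - M * (1 - x%:R) <= D - a * f ^+ 2 -> D + a * f ^+ 2 <= M * x%:R ->
  exceeds_loss a f D.
Proof.
case: x; rewrite /= ?subrr ?subr0 ?mulr0 ?mulr1 => f_lb f_ub D_lb D_ub.
  by left; rewrite pipe_loss_ge0E //; split; lra.
by right; rewrite pipe_loss_le0E //; split; lra.
Qed.

Lemma pipe_loss_big_M a f M : 0 < a -> `|f| + 2 * a * f ^+ 2 <= M ->
  [/\ - M * (1 - ((0 <= f)%R)%:R) <= f, f <= M * ((0 <= f)%R)%:R,
      - M * (1 - ((0 <= f)%R)%:R) <= pipe_loss a f - a * f ^+ 2 &
      pipe_loss a f + a * f ^+ 2 <= M * ((0 <= f)%R)%:R].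
Proof.
move=> a0; have af2 : 0 <= a * f ^+ 2 by rewrite mulr_ge0 ?sqr_ge0 ?ltW.
have [f0|f0] := boolP (0 <= f); rewrite /=.
  by rewrite pipe_loss_ge0E // ger0_norm // subrr mulr0 mulr1; split; lra.
rewrite -ltNge in f0.
by rewrite pipe_loss_le0E ?(ltW f0) // ltr0_norm // subr0 mulr0 mulr1; split; lra.
Qed.

End PipeLoss.

Section Cactus.
Variables (N P : nat) (src dst : 'I_P -> 'I_N).
Hypothesis no_loop : loopless src dst.

Local Notation joins := (joins src dst).
Local Notation is_cycle := (is_cycle src dst).

Lemma joinsC e u v : joins e u v = joins e v u.
Proof. by rewrite /joins orbC. Qed.

Lemma joins_ends e : joins e (src e) (dst e).
Proof. by rewrite /joins !eqxx. Qed.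

Lemma joins_endsP e u v u' v' : joins e u v -> joins e u' v' ->
  (u = u' /\ v = v') \/ (u = v' /\ v = u').
Proof.
by rewrite /joins => /orP[]/andP[/eqP<- /eqP<-] /orP[]/andP[/eqP<- /eqP<-]; [left|right|right|left].
Qed.

Lemma joins_neq e u v : joins e u v -> u != v.
Proof.
have := no_loop e; rewrite /joins => ne.
by case/orP=> /andP[/eqP<- /eqP<-]; rewrite // eq_sym.
Qed.

Lemma joins_src_neq e x y : joins e x y -> (src e != y) = ~~ (src e != x).
Proof.
move=> jxy; have xy := joins_neq jxy.
case: (joins_endsP (joins_ends e) jxy) => [[-> _]|[-> _]]; rewrite eqxx //=.
by rewrite eq_sym xy.
Qed.

Lemma potentials_agree (T : Type) (f g : 'I_N -> T) r :
  connected_graph src dst -> (forall e, f (src e) = g (src e) <-> f (dst e) = g (dst e)) ->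
  f r = g r -> forall n, f n = g n.
Proof.
move=> conn transfer fg_r n; have /connectP[p walk ->] := conn r n.
elim: p r walk fg_r => //= y p IHp x /andP[/existsP[e xy] walk] fg_x; apply: IHp walk _.
by case/orP: xy => /andP[/eqP sx /eqP dy]; rewrite -?sx -?dy; apply/transfer; rewrite ?sx ?dy.
Qed.

Definition adj_without (F : pred 'I_P) : rel 'I_N :=
  fun u v => [exists e, ~~ F e && joins e u v].

Lemma uniq_walk_edges_inj (ws : seq 'I_N) u (ee : nat -> 'I_P) i j :
  uniq ws -> (i < (size ws).-1)%N -> (j < (size ws).-1)%N ->
  (forall n, (n < (size ws).-1)%N -> joins (ee n) (nth u ws n) (nth u ws n.+1)) ->
  ee i = ee j -> i = j.
Proof.
move=> ws_uniq ilt jlt ee_joins eij.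
have nth_inj m n : (m < size ws)%N -> (n < size ws)%N -> nth u ws m = nth u ws n -> m = n.
  by move=> mlt nlt /eqP; rewrite nth_uniq // => /eqP.
have := ee_joins j jlt; rewrite -eij => /(joins_endsP (ee_joins i ilt)).
case=> [[e1 _]|[e1 e2]]; first by apply: nth_inj e1; lia.
by have := nth_inj _ _ _ _ e1; have := nth_inj _ _ _ _ e2; lia.
Qed.

Lemma cycle_through_edge (F : pred 'I_P) l u v :
  F l -> joins l v u -> connect (adj_without F) u v ->
  exists k (es : 'I_k -> 'I_P) (vs : 'I_k -> 'I_N),
    [/\ is_cycle es vs, l \in codom es & forall i, es i = l \/ ~~ F (es i)].
Proof.
move=> Fl + /connectP[p0 walk0 v_last]; rewrite {}v_last.
case: (shortenP walk0) => p walk p_uniq _ jl.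
have s_gt0 : (0 < size p)%N.
  by case: p jl {walk p_uniq} => //= /joins_neq; rewrite eqxx.
set s := size p; pose ws := u :: p.
pose ee n := odflt l [pick e | ~~ F e && joins e (nth u ws n) (nth u ws n.+1)].
have ee_ok n : (n < s)%N -> ~~ F (ee n) && joins (ee n) (nth u ws n) (nth u ws n.+1).
  move=> ns; move/pathP: walk => /(_ u n ns) /existsP[e e_ok].
  by rewrite /ee; case: pickP => [e' -> //|/(_ e)]; rewrite e_ok.
pose vs (i : 'I_s.+1) := nth u ws i.
pose es (i : 'I_s.+1) := if (i < s)%N then ee i else l.
have ordS_val (i : 'I_s.+1) : nat_of_ord (ordS i) = if (i < s)%N then i.+1 else 0%N.
  rewrite /=; case: ltnP => [i_lt|i_ge]; first by rewrite modn_small.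
  have -> : i.+1 = s.+1 by have := ltn_ord i; lia.
  exact: modnn.
exists s.+1, es, vs; split.
- split=> //.
  + move=> i j; rewrite /es; case: ltnP => i_lt; case: ltnP => j_lt eij.
    * apply: val_inj; apply: (uniq_walk_edges_inj (u := u) (ee := ee) p_uniq) => //.
      by move=> n ns; case/andP: (ee_ok n ns).
    * by move: (ee_ok i i_lt); rewrite eij Fl.
    * by move: (ee_ok j j_lt); rewrite -eij Fl.
    * by apply: ord_inj; have := ltn_ord i; have := ltn_ord j; lia.
  + by move=> i j /eqP; rewrite nth_uniq // => /eqP /val_inj.
  + move=> i; rewrite /es /vs ordS_val; case: ltnP => i_lt; first by case/andP: (ee_ok i i_lt).
    have -> : nat_of_ord i = s by have := ltn_ord i; lia.
    by rewrite /ws nth0 -[s]/((size (u :: p)).-1) nth_last.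
- by apply/codomP; exists ord_max; rewrite /es /= ltnn.
- by move=> i; rewrite /es; case: ltnP => i_lt; [right; case/andP: (ee_ok i i_lt) | left].
Qed.

Hypothesis cactus : at_most_one_cycle src dst.

Lemma cycle_detour k (es : 'I_k -> 'I_P) (vs : 'I_k -> 'I_N) (F : pred 'I_P) l e x w :
  is_cycle es vs -> l \in codom es -> e \in codom es ->
  F l -> F e -> e != l -> joins l x w -> ~~ connect (adj_without F) w x.
Proof.
move=> cyc l_es e_es Fl Fe el jl; apply/negP => /(cycle_through_edge Fl jl).
case=> k' [es' [vs' [cyc' l_es' avoidF]]].
have := cactus cyc cyc' l_es l_es' e; rewrite e_es => /esym/codomP[j ej].
case: (avoidF j) => [ej_l | nFe]; last by rewrite -ej Fe in nFe.
by rewrite ej ej_l eqxx in el.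
Qed.

Definition shares_cycle l e : Prop := exists k (es : 'I_k -> 'I_P) (vs : 'I_k -> 'I_N),
  [/\ is_cycle es vs, l \in codom es & e \in codom es].

Definition cycle_class l : {set 'I_P} := l |: [set e | `[< shares_cycle l e >]].

Lemma cycle_class_cycle k (es : 'I_k -> 'I_P) (vs : 'I_k -> 'I_N) l :
  is_cycle es vs -> l \in codom es -> cycle_class l =i codom es.
Proof.
move=> cyc l_es e; rewrite !inE; apply/idP/idP.
  case/orP=> [/eqP -> // | /asboolP[k' [es' [vs' [cyc' l_es' e_es']]]]].
  by rewrite (cactus cyc cyc' l_es l_es').
by move=> e_es; apply/orP; right; apply/asboolP; exists k, es, vs.
Qed.

Lemma cycle_class_bridge l : ~ on_cycle src dst l -> cycle_class l = [set l].
Proof.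
move=> bridge; apply/setP => e; rewrite !inE orbC; case: asboolP => //= -[k [es [vs [cyc l_es _]]]].
by case: bridge; exists k, es, vs.
Qed.

Variable R : realType.
Local Notation A := (incidence R src dst).

Definition edge_drop (psi : 'cV[R]_N) l := psi (src l) 0 - psi (dst l) 0.

Lemma incidence_mul (y : 'cV[R]_N) e : (A *m y) e 0 = y (src e) 0 - y (dst e) 0.
Proof.
rewrite mxE (bigD1 (src e)) //= (bigD1 (dst e)) 1?eq_sym ?no_loop //=.
rewrite big1 => [|n /andP[ns nd]]; last by rewrite !mxE eq_sym (negbTE ns) eq_sym (negbTE nd) mul0r.
by rewrite !mxE eqxx (negbTE (no_loop e)) eqxx addr0 mul1r mulN1r.
Qed.

Lemma circulation_orthogonal (c : 'cV[R]_P) (y : 'cV[R]_N) : A^T *m c = 0 ->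
  \sum_e c e 0 * (y (src e) 0 - y (dst e) 0) = 0.
Proof.
move=> circ; have := congr1 (fun M : 'cV_N => (y^T *m M) 0 0) circ.
rewrite /= mulmx0 mulmxA -trmx_mul mxE [RHS]mxE => orth0; rewrite -[RHS]orth0.
by apply: eq_bigr => e _; rewrite mxE incidence_mul mulrC.
Qed.

Lemma cut_without (c : 'cV[R]_P) (F : pred 'I_P) w : A^T *m c = 0 ->
  \sum_(e | F e) c e 0 * ((connect (adj_without F) w (src e))%:R
                          - (connect (adj_without F) w (dst e))%:R) = 0.
Proof.
move=> circ; have := circulation_orthogonal (\col_n (connect (adj_without F) w n)%:R) circ.
rewrite (bigID F) /= [X in _ + X]big1 ?addr0 => [|e nFe].
  by under eq_bigr do rewrite !mxE.
have step u v : joins e u v -> connect (adj_without F) u v.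
  by move=> juv; apply: connect1; apply/existsP; exists e; rewrite nFe.
have ends_conn : connect (adj_without F) w (src e) = connect (adj_without F) w (dst e).
  by apply/idP/idP => /connect_trans; apply; apply: step;
    [exact: joins_ends | rewrite joinsC; exact: joins_ends].
by rewrite !mxE ends_conn subrr mulr0.
Qed.

Lemma crossing_sign (S : pred 'I_N) e x y : joins e x y -> S x = false -> S y = true ->
  ((S (src e))%:R - (S (dst e))%:R : R) = (-1) ^+ (src e != y).
Proof.
move=> jxy; move: (joins_neq jxy).
case: (joins_endsP (joins_ends e) jxy) => [[-> ->]|[-> ->]] xy -> -> /=.
  by rewrite (negbTE xy) sub0r.
by rewrite eqxx subr0.
Qed.

Lemma bridge_flow0 (c : 'cV[R]_P) l : A^T *m c = 0 -> ~ on_cycle src dst l -> c l 0 = 0.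
Proof.
(* Only l leaves the component of src l in the graph without l. *)
move=> circ bridge; have := cut_without (pred1 l) (src l) circ.
have not_back : connect (adj_without (pred1 l)) (src l) (dst l) = false.
  apply/negP => /(cycle_through_edge (eqxx l : pred1 l l)).
  rewrite joinsC joins_ends => /(_ isT) [k [es [vs [cyc l_in _]]]].
  by apply: bridge; exists k, es, vs.
have jl : joins l (dst l) (src l) by rewrite joinsC joins_ends.
by rewrite big_pred1_eq (crossing_sign jl) ?connect0 // eqxx mulr1.
Qed.

Definition reversed k (es : 'I_k -> 'I_P) (vs : 'I_k -> 'I_N) i : bool := src (es i) != vs i.

Lemma cycle_flow_step (c : 'cV[R]_P) k (es : 'I_k -> 'I_P) (vs : 'I_k -> 'I_N) i :
  A^T *m c = 0 -> is_cycle es vs ->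
  (-1) ^+ reversed es vs (ordS i) * c (es (ordS i)) 0 = (-1) ^+ reversed es vs i * c (es i) 0.
Proof.
move=> circ cyc; have [_ es_inj _ es_joins] := cyc.
set j := ordS i; set w := vs j.
have ji : joins (es i) (vs i) w := es_joins i.
have jj : joins (es j) (vs (ordS j)) w by rewrite joinsC; exact: es_joins j.
have ne : es j != es i.
  by apply/eqP => /es_inj eji; move: (joins_neq ji); rewrite /w eji eqxx.
(* By (A2), removing es i and es j cuts w off from both of its neighbours on the cycle. *)
pose F e := (e == es i) || (e == es j).
have := cut_without F w circ; rewrite (bigD1 (es i)) /=; last by rewrite /F eqxx.
rewrite (big_pred1 (es j)) => [|e]; last first.
  by rewrite /F; case: (eqVneq e (es i)) => [->|]; rewrite ?andbT //= eq_sym (negbTE ne).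
have Sw : connect (adj_without F) w w := connect0 _ _.
have cut_i : connect (adj_without F) w (vs i) = false.
  by apply/negbTE; apply: (cycle_detour (e := es j) cyc _ _ _ _ ne ji);
    rewrite /F ?codom_f ?eqxx ?orbT.
have cut_j : connect (adj_without F) w (vs (ordS j)) = false.
  by apply/negbTE; apply: (cycle_detour (e := es i) cyc _ _ _ _ _ jj);
    rewrite /F ?codom_f ?eqxx ?orbT // eq_sym.
rewrite (crossing_sign ji) // (crossing_sign jj) // /reversed -/w.
rewrite (joins_src_neq ji) signrN mulrN addrC => /eqP; rewrite subr_eq0 => /eqP.
by rewrite !(mulrC (c _ 0)).
Qed.

Lemma cycle_flow_const (c : 'cV[R]_P) k (es : 'I_k -> 'I_P) (vs : 'I_k -> 'I_N) :
  A^T *m c = 0 -> is_cycle es vs ->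
  exists dl, forall i, (-1) ^+ reversed es vs i * c (es i) 0 = dl.
Proof.
move=> circ cyc; have [k_gt0 _ _ _] := cyc.
exists ((-1) ^+ reversed es vs (Ordinal k_gt0) * c (es (Ordinal k_gt0)) 0).
case=> n; elim: n => [|n IHn] n_lt; first by rewrite (bool_irrelevance n_lt k_gt0).
have n_lt' : (n < k)%N by apply: ltnW.
have -> : Ordinal n_lt = ordS (Ordinal n_lt') by apply: val_inj; rewrite /= modn_small.
by rewrite (cycle_flow_step _ circ cyc) IHn.
Qed.

Lemma cycle_telescope (psi : 'I_N -> R) k (es : 'I_k -> 'I_P) (vs : 'I_k -> 'I_N) :
  is_cycle es vs ->
  \sum_i (-1) ^+ reversed es vs i * (psi (src (es i)) - psi (dst (es i))) = 0.
Proof.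
case=> _ _ _ es_joins.
rewrite (eq_bigr (fun i => psi (vs i) - psi (vs (ordS i)))) => [|i _].
  by rewrite sumrB (reindex_inj (@ordS_inj k)) subrr.
rewrite /reversed; case: (joins_endsP (joins_ends (es i)) (es_joins i)) => [[-> ->]|[-> ->]].
  by rewrite eqxx mul1r.
by rewrite eq_sym (negbTE (joins_neq (es_joins i))) mulN1r opprB.
Qed.

End Cactus.

Section Optimality.
Variables (R : realType) (N P : nat) (src dst : 'I_P -> 'I_N) (comp : pred 'I_P).
Variable a : 'I_P -> R.
Hypotheses (no_loop : loopless src dst) (cactus : at_most_one_cycle src dst).
Hypothesis comp_acyclic : forall l, comp l -> ~ on_cycle src dst l.
Hypothesis a_gt0 : forall l, ~~ comp l -> 0 < a l.
Variables (phi phis : 'cV[R]_P) (psi psis : 'cV[R]_N).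
Hypothesis same_injections :
  (incidence R src dst)^T *m phi = (incidence R src dst)^T *m phis.
Hypothesis relaxed : forall l, ~~ comp l ->
  exceeds_loss (a l) (phi l 0) (edge_drop src dst psi l).
Hypothesis exact : forall l, ~~ comp l ->
  edge_drop src dst psis l = pipe_loss (a l) (phis l 0).

Local Notation drop := (edge_drop src dst).
Let excess l := `|drop psi l| - `|drop psis l|.
Let pipe_match l := phi l 0 = phis l 0 /\ drop psi l = drop psis l.

Let circ : (incidence R src dst)^T *m (phi - phis) = 0.
Proof. by rewrite mulmxBr same_injections subrr. Qed.

Lemma bridge_excess l : ~~ comp l -> ~ on_cycle src dst l ->
  0 <= excess l /\ (excess l <= 0 -> pipe_match l).
Proof.
move=> pipe bridge; have := bridge_flow0 no_loop circ bridge; rewrite !mxE => /eqP.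
rewrite subr_eq0 => /eqP same_flow.
have [le_norm eq_norm] := exceeds_loss_norm (a_gt0 pipe) (relaxed pipe).
rewrite /excess exact // -same_flow subr_ge0 subr_le0; split=> // /eq_norm drop_eq.
by split; rewrite // drop_eq exact // same_flow.
Qed.

Lemma cycle_excess k (es : 'I_k -> 'I_P) (vs : 'I_k -> 'I_N) : is_cycle src dst es vs ->
  0 <= \sum_i excess (es i) /\ (\sum_i excess (es i) <= 0 -> forall i, pipe_match (es i)).
Proof.
move=> cyc; have [k_gt0 _ _ _] := cyc.
have pipe i : ~~ comp (es i).
  by apply/negP => /comp_acyclic; apply; exists k, es, vs; rewrite codom_f.
pose s i : R := (-1) ^+ reversed src es vs i.
have [dl flow_const] := cycle_flow_const no_loop cactus circ cyc.
have sL i : pipe_loss (a (es i)) (s i * phis (es i) 0) = s i * drop psis (es i).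
  by rewrite pipe_loss_sign exact.
have a_es i : 0 < a (es i) := a_gt0 (pipe i).
have fD i : exceeds_loss (a (es i)) (s i * phi (es i) 0) (s i * drop psi (es i)).
  exact/exceeds_loss_sign/relaxed.
have D0 : \sum_i s i * drop psi (es i) = 0.
  exact: (cycle_telescope no_loop (fun n => psi n 0) cyc).
have L0 : \sum_i pipe_loss (a (es i)) (s i * phis (es i) 0) = 0.
  by under eq_bigr do rewrite sL; exact: (cycle_telescope no_loop (fun n => psis n 0) cyc).
have shift i : s i * phi (es i) 0 = s i * phis (es i) 0 + dl.
  by rewrite -(flow_const i) !mxE -/(s i) mulrBr addrC subrK.
have [le_sum eq_sum] := cycle_loss_shift k_gt0 a_es fD D0 L0 shift.
have eL : \sum_i `|pipe_loss (a (es i)) (s i * phis (es i) 0)| = \sum_i `|drop psis (es i)|.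
  by apply: eq_bigr => i _; rewrite sL normrMsign.
have eD : \sum_i `|s i * drop psi (es i)| = \sum_i `|drop psi (es i)|.
  by apply: eq_bigr => i _; rewrite normrMsign.
rewrite eL eD in le_sum eq_sum; rewrite /excess sumrB subr_ge0 subr_le0.
split=> // /eq_sum match_es i; have [flow_i drop_i] := match_es i; rewrite sL in drop_i.
by split; apply: (inv_inj (signrMK (reversed src es vs i))).
Qed.


Local Notation cycle_class := (cycle_class src dst).

Lemma cycle_class_excess l : ~~ comp l ->
  0 <= \sum_(e in cycle_class l) excess e /\ (\sum_(e in cycle_class l) excess e <= 0 -> pipe_match l).
Proof.
move=> pipe; case: (pselect (on_cycle src dst l)) => [[k [es [vs [cyc l_es]]]] | bridge].
  have [_ es_inj _ _] := cyc.
  rewrite (eq_bigl _ _ (cycle_class_cycle cactus cyc l_es)) sum_codom //.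
  have [ge0 match_es] := cycle_excess cyc; split=> // /match_es.
  by case/codomP: l_es => i ->.
by rewrite cycle_class_bridge // big_set1; exact: bridge_excess.
Qed.

Lemma mem_cycle_class l e : ~~ comp l -> (e \in cycle_class l) = ~~ comp e && (cycle_class e == cycle_class l).
Proof.
move=> pipe; apply/idP/andP => [e_l | [_ /eqP <-]]; last exact: setU11.
case: (pselect (on_cycle src dst l)) => [[k [es [vs [cyc l_es]]]] | bridge].
  have e_es : e \in codom es by rewrite -(cycle_class_cycle cactus cyc l_es).
  split; first by apply/negP => /comp_acyclic; apply; exists k, es, vs.
  by apply/eqP/setP => x; rewrite (cycle_class_cycle cactus cyc l_es) (cycle_class_cycle cactus cyc e_es).
by move: e_l; rewrite cycle_class_bridge // inE => /eqP ->; rewrite cycle_class_bridge.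
Qed.

Lemma pipes_match : \sum_(l | ~~ comp l) excess l <= 0 -> forall l, ~~ comp l -> pipe_match l.
Proof.
move=> total l pipe; pose pipes : {pred 'I_P} := [pred e | ~~ comp e].
rewrite (partition_big_imset cycle_class) /= in total.
have block l0 : ~~ comp l0 ->
    \sum_(e in pipes | cycle_class e == cycle_class l0) excess e = \sum_(e in cycle_class l0) excess e.
  by move=> pipe0; apply: eq_bigl => e; rewrite mem_cycle_class.
have blocks_ge0 C : C \in [set cycle_class e | e in pipes] ->
    0 <= \sum_(e in pipes | cycle_class e == C) excess e.
  by case/imsetP=> l0 pipe0 ->; rewrite block //; exact: (cycle_class_excess pipe0).1.
have blocks0 : \sum_(C in [set cycle_class e | e in pipes]) \sum_(e in pipes | cycle_class e == C) excess e = 0.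
  by apply/eqP; rewrite eq_le total sumr_ge0.
have := psumr_eq0P blocks_ge0 blocks0 (imset_f cycle_class (pipe : l \in pipes)).
by rewrite block // => /eqP; rewrite eq_le => /andP[/(cycle_class_excess pipe).2].
Qed.

End Optimality.

Section BigM.
Variables (R : realType) (N P : nat) (src dst : 'I_P -> 'I_N) (comp : pred 'I_P).
Variables (r : 'I_N) (psir : R) (q : 'cV[R]_N) (a alpha : 'I_P -> R).

Definition big_M_bound (phi : 'cV[R]_P) : R :=
  \sum_l (`|phi l 0| + 2 * `|a l| * phi l 0 ^+ 2).

Lemma G1_sol_G2_feas M phi psi : (forall l, ~~ comp l -> 0 < a l) ->
  G1_sol src dst comp r psir q a alpha phi psi -> big_M_bound phi <= M ->
  G2_feas src dst comp r psir q a alpha M phi psi (fun l => 0 <= phi l 0).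
Proof.
move=> a_gt0 [r_eq A_phi pipe_eq _ comp_eq] bound_M; split=> // l pipe.
have term_le : `|phi l 0| + 2 * `|a l| * phi l 0 ^+ 2 <= big_M_bound phi.
  rewrite /big_M_bound (bigD1 l) //= lerDl.
  by apply: sumr_ge0 => e _; rewrite addr_ge0 // mulr_ge0 ?sqr_ge0 // mulr_ge0.
rewrite (gtr0_norm (a_gt0 _ pipe)) in term_le.
by rewrite pipe_eq //; apply: (pipe_loss_big_M (a_gt0 _ pipe) (le_trans term_le bound_M)).
Qed.

Lemma G2_feas_exceeds_loss M phi psi x : G2_feas src dst comp r psir q a alpha M phi psi x ->
  forall l, ~~ comp l -> exceeds_loss (a l) (phi l 0) (edge_drop src dst psi l).
Proof. by case=> _ _ _ pipe_rel l /pipe_rel[]; exact: big_M_exceeds_loss. Qed.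

End BigM.

Theorem theorem2 (R : realType) (N P : nat) (src dst : 'I_P -> 'I_N)
  (comp : pred 'I_P) (r : 'I_N) (psir : R) (q : 'cV[R]_N)
  (a alpha : 'I_P -> R) :
  loopless src dst ->
  connected_graph src dst ->
  (forall l, comp l -> ~ on_cycle src dst l) ->
  at_most_one_cycle src dst ->
  \sum_(n < N) q n 0 = 0 ->
  (forall l, ~~ comp l -> 0 < a l) ->
  (forall l, comp l -> 0 < alpha l) ->
  (exists phi psi, G1_sol src dst comp r psir q a alpha phi psi) ->
  exists M0 : R, forall M : R, M0 <= M ->
    forall phi psi x, G2_min src dst comp r psir q a alpha M phi psi x ->
      G1_sol src dst comp r psir q a alpha phi psi.
Proof.
move=> no_loop conn comp_acyclic cactus _ a_gt0 alpha_gt0 [phis [psis sol]].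
exists (big_M_bound a phis) => M bound_M phi psi x [feas opt].
have excess_le0 :
    \sum_(l | ~~ comp l) (`|edge_drop src dst psi l| - `|edge_drop src dst psis l|) <= 0.
  by rewrite sumrB subr_le0; exact: opt _ _ _ (G1_sol_G2_feas a_gt0 sol bound_M).
have [r_eq A_phi comp_eq _] := feas; have [r_eqs A_phis pipe_eqs psis_ge0 comp_eqs] := sol.
have A_eq : (incidence R src dst)^T *m phi = (incidence R src dst)^T *m phis.
  by rewrite A_phi A_phis.
have pipes := pipes_match no_loop cactus comp_acyclic a_gt0 A_eq
  (G2_feas_exceeds_loss feas) pipe_eqs excess_le0.
have same_psi : forall n, psi n 0 = psis n 0.
  apply: (potentials_agree (r := r) conn) => [e|]; last by rewrite r_eq r_eqs.
  have [comp_e | pipe_e] := boolP (comp e).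
    have [-> _] := comp_eq e comp_e; have [-> _] := comp_eqs e comp_e.
    by split=> [-> // | /(mulfI (lt0r_neq0 (alpha_gt0 e comp_e)))].
  by have [_] := pipes e pipe_e; rewrite /edge_drop; split=> ?; lra.
split=> // [l pipe_l | n]; last by rewrite same_psi.
by have [-> drop_eq] := pipes l pipe_l; rewrite -pipe_eqs.
Qed.
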